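(* Let $n\geq 2$, let $p$ be a prime, let $x$ be a point of Culler--Vogtmann outer space $CV_n$, let $N$ be a normal subgroup of $F_n$ of index $p$, and let $A\le\mathrm{Out}(F_n)$ be the (finite index) subgroup preserving $N$ and each of its cosets. Then the following three sets are finite and have the same cardinality: (a) the set of $A$-orbits of points in the $\mathrm{Out}(F_n)$-orbit of $x$; (b) the set of $\mathrm{Out}(F_n)_x$-orbits of pairs $(N',tN')$, where $N'$ is an index $p$ normal subgroup of $F_n$ and $tN'\neq N'$ is a coset of it; (c) the set of $\mathrm{Out}(F_n)_x$-orbits of non-trivial homomorphisms $F_n\to\mathbb{Z}/p$.
   Context: $\mathrm{Out}(F_n)$ acts on $CV_n$ on the right; $\mathrm{Out}(F_n)_x$ denotes the stabiliser of $x$. Since an index $p$ normal subgroup $N'$ has abelian quotient, inner automorphisms preserve $N'$ and each of its cosets, so $\mathrm{Out}(F_n)$ acts on such pairs $(N',tN')$ (via $\varphi\cdot(N',tN')=(\varphi^{-1}(N'),\varphi^{-1}(tN'))$) and on homomorphisms $F_n\to\mathbb{Z}/p$ by precomposition. *)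

From Stdlib Require Import Reals.
From mathcomp Require Import all_boot.
From mathcomp Require Import zmodp.

Set Implicit Arguments.
Unset Strict Implicit.
Unset Printing Implicit Defensive.

Section Words.
Variables (E : eqType) (inv : E -> E).

Definition red_cons (e : E) (s : seq E) : seq E :=
  match s with
  | e' :: s' => if e' == inv e then s' else e :: s
  | [::] => [:: e]
  end.

Definition reduce (s : seq E) : seq E := foldr red_cons [::] s.

Definition reducedb (s : seq E) : bool :=
  if s is e :: s' then path (fun a b => b != inv a) e s' else true.

Definition winv (s : seq E) : seq E := rev (map inv s).
End Words.

Definition letter (n : nat) := ('I_n * bool)%type.
Definition linv n (l : letter n) : letter n := (l.1, ~~ l.2).

Definition Fn (n : nat) := {w : seq (letter n) | reducedb (@linv n) w}.

Definition Fone n : Fn n := exist _ [::] (erefl true).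
Definition Fmul n (a b : Fn n) : Fn n :=
  insubd (Fone n) (reduce (@linv n) (val a ++ val b)).
Definition Finv n (a : Fn n) : Fn n :=
  insubd (Fone n) (winv (@linv n) (val a)).

(* automorphisms of F_n (representatives of elements of Out(F_n)) *)
Definition is_aut n (phi : Fn n -> Fn n) : Prop :=
  (forall a b, phi (Fmul a b) = Fmul (phi a) (phi b)) /\ bijective phi.

Definition is_normal n (N : Fn n -> Prop) : Prop :=
  [/\ N (Fone n),
      (forall a b, N a -> N b -> N (Fmul a b)),
      (forall a, N a -> N (Finv a)) &
      (forall g a, N a -> N (Fmul (Fmul g a) (Finv g)))].

(* "S/r has exactly k classes": a complete irredundant system of k
   representatives of the relation r on the set S *)
Definition num_classes (X : Type) (S : X -> Prop) (r : X -> X -> Prop) (k : nat)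
  : Prop :=
  exists rep : 'I_k -> X,
    [/\ (forall i, S (rep i)),
        (forall i j, r (rep i) (rep j) -> i = j) &
        (forall y, S y -> exists i, r y (rep i))].

Definition has_index n (N : Fn n -> Prop) (k : nat) : Prop :=
  num_classes (fun _ : Fn n => True) (fun a b => N (Fmul (Finv a) b)) k.

Definition is_coset n (N C : Fn n -> Prop) : Prop :=
  exists t, forall w, C w <-> N (Fmul (Finv t) w).

(* ---------- Finite graphs (Serre style: oriented edges with involution) *)
Record graph := Graph {
  gV : finType;
  gE : finType;
  ginv : gE -> gE;
  gorg : gE -> gV }.

Definition gter (G : graph) (e : gE G) : gV G := gorg (ginv e).

Definition is_path (G : graph) (v w : gV G) (s : seq (gE G)) : bool :=
  match s with
  | [::] => v == w
  | e :: s' => [&& gorg e == v,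
                  path (fun a b => gorg b == gter a) e s' &
                  gter (last e s') == w]
  end.

(* reduced loops at v: the elements of pi_1(G, v) *)
Definition is_rloop (G : graph) (v : gV G) (s : seq (gE G)) : bool :=
  is_path v v s && reducedb (@ginv G) s.

Record mgraph (n : nat) := MG {
  mG : graph;
  mbase : gV mG;
  mmark : Fn n -> seq (gE mG);   (* marking, as the induced map on pi_1 *)
  mlen : gE mG -> R }.
Arguments mG {n} m.
Arguments mbase {n} m.
Arguments mmark {n} m _.
Arguments mlen {n} m _.

Definition is_cv_point n (x : mgraph n) : Prop :=
  let G := mG x in
  [/\ (forall e : gE G, ginv (ginv e) = e /\ ginv e != e),
      (forall v w : gV G, exists s, is_path v w s),
      (forall v : gV G, 3 <= #|[pred e : gE G | gorg e == v]|),
      ((forall e : gE G, Rlt R0 (mlen x e) /\ mlen x (ginv e) = mlen x e) /\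
      (\big[Rplus/R0]_(e : gE G) mlen x e = IZR 2%Z)
        (* each geometric edge counted twice: total volume 1 *)) &
      [/\ (forall w, is_rloop (mbase x) (mmark x w)),
          (forall a b, mmark x (Fmul a b)
                       = reduce (@ginv G) (mmark x a ++ mmark x b)),
          injective (mmark x) &
          (forall s, is_rloop (mbase x) s -> exists w, mmark x w = s)]].

(* equivalence of marked metric graphs: an isometry h with h o m_x freely
   homotopic to m_y, i.e. equal on pi_1 up to a change-of-basepoint path *)
Definition mg_equiv n (x y : mgraph n) : Prop :=
  exists (hV : gV (mG x) -> gV (mG y)) (hE : gE (mG x) -> gE (mG y))
         (gam : seq (gE (mG y))),
    [/\ bijective hV /\ bijective hE,
        (forall e, gorg (hE e) = hV (gorg e) /\ hE (ginv e) = ginv (hE e)),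
        (forall e, mlen y (hE e) = mlen x e),
        is_path (mbase y) (hV (mbase x)) gam &
        (forall w, mmark y w
           = reduce (@ginv (mG y)) (gam ++ map hE (mmark x w)
                                        ++ winv (@ginv (mG y)) gam))].

Definition cv_act n (x : mgraph n) (phi : Fn n -> Fn n) : mgraph n :=
  @MG n (mG x) (mbase x) (fun w => mmark x (phi w)) (mlen x).

Definition in_stab n (x : mgraph n) (phi : Fn n -> Fn n) : Prop :=
  is_aut phi /\ mg_equiv (cv_act x phi) x.

Definition in_A n (N : Fn n -> Prop) (phi : Fn n -> Fn n) : Prop :=
  is_aut phi /\
  (forall t w, N (Fmul (Finv t) (phi w)) <-> N (Fmul (Finv t) w)).

Definition is_Zp_hom n p (f : Fn n -> 'Z_p) : Prop :=
  forall a b, f (Fmul a b) = (f a + f b)%R.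

(* Pairs (N', tN') with tN' <> N' are the fibres (ker f, f^-1(1)) of the
   non-trivial homomorphisms f : F_n -> Z/p: left multiplication by t permutes
   the p cosets of N' without fixed points, hence as a p-cycle, and the position
   of a coset along this cycle is a homomorphism with kernel N' sending t to 1.
   Since n >= 2, Nielsen transvections x_i |-> x_i x_j make Aut(F_n) transitive on
   non-trivial homomorphisms, so every f equals f_N o chi_f^-1 for an automorphism
   chi_f, where ker f_N = N.  As A is the stabiliser of f_N, the map
   f |-> x.chi_f induces a bijection from the Out(F_n)_x-orbits of homomorphisms
   onto the A-orbits of Out(F_n).x.  A homomorphism is determined by its values on
   the n generators, so there are finitely many orbits. *)

From Pilot Require Import Defs.
From HB Require Import structures.
From Stdlib Require Import Reals.
From mathcomp Require Import all_boot zmodp ssralg fingroup perm action cyclic.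
From mathcomp Require Import boolp.

Set Implicit Arguments.
Unset Strict Implicit.
Unset Printing Implicit Defensive.

Section ReducedWords.
Variables (E : eqType) (inv : E -> E).
Hypothesis invK : involutive inv.
Local Notation reduce := (reduce inv).
Local Notation red_cons := (red_cons inv).
Local Notation reducedb := (reducedb inv).
Local Notation winv := (winv inv).
Arguments Defs.reducedb : simpl never.

Lemma reducedbE s : reducedb s = sorted (fun a b => b != inv a) s.
Proof. by case: s. Qed.

Lemma reducedb_cons e s :
  reducedb (e :: s) = (if s is e' :: _ then e' != inv e else true) && reducedb s.
Proof. by case: s. Qed.

Lemma reducedb_red_cons e s : reducedb s -> reducedb (red_cons e s).
Proof.
case: s => [|e' s] // rs; rewrite /red_cons; case: ifP => [_|e'N].
  by move: rs; rewrite reducedb_cons => /andP[].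
by rewrite reducedb_cons e'N.
Qed.

Lemma reducedb_reduce s : reducedb (reduce s).
Proof. by elim: s => //= e s; apply: reducedb_red_cons. Qed.

Lemma red_cons_reduced e s : reducedb (e :: s) -> red_cons e s = e :: s.
Proof. by case: s => //= e' s; rewrite reducedb_cons => /andP[/negPf-> _]. Qed.

Lemma reduce_id s : reducedb s -> reduce s = s.
Proof.
elim: s => //= e s IHs res.
have rs : reducedb s by move: res; rewrite reducedb_cons => /andP[].
by rewrite IHs ?red_cons_reduced.
Qed.

Lemma red_consK e u : reducedb u -> red_cons (inv e) (red_cons e u) = u.
Proof.
case: u => [|e' u] /=; first by rewrite invK eqxx.
by case: ifP => [/eqP-> | _]; [apply: red_cons_reduced | rewrite /= invK eqxx].
Qed.

Lemma red_consVK e u : reducedb u -> red_cons e (red_cons (inv e) u) = u.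
Proof. by move=> ru; rewrite -{1}(invK e) red_consK. Qed.

Lemma reduce_cat s t : reduce (s ++ t) = foldr red_cons (reduce t) s.
Proof. exact: foldr_cat. Qed.

Lemma reduce_red_cons_cat e r t :
  reduce (red_cons e r ++ t) = red_cons e (reduce (r ++ t)).
Proof.
case: r => [|e' r] //=; case: ifP => [/eqP-> | _] //=.
by rewrite red_consVK // reducedb_reduce.
Qed.

Lemma reduce_catl s t : reduce (reduce s ++ t) = reduce (s ++ t).
Proof. by elim: s => //= e s IHs; rewrite reduce_red_cons_cat IHs. Qed.

Lemma reduce_catr s t : reduce (s ++ reduce t) = reduce (s ++ t).
Proof. by rewrite !reduce_cat reduce_id // reducedb_reduce. Qed.

Lemma reduce_cancel u e v : reduce (u ++ inv e :: e :: v) = reduce (u ++ v).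
Proof. by rewrite !reduce_cat /= red_consK // reducedb_reduce. Qed.

Lemma reduce_catm s t u : reduce (s ++ reduce t ++ u) = reduce (s ++ t ++ u).
Proof. by rewrite reduce_cat reduce_catl -reduce_cat. Qed.

Lemma winv_cons e s : winv (e :: s) = rcons (winv s) (inv e).
Proof. by rewrite /winv /= rev_cons. Qed.

Lemma winv_cat s t : winv (s ++ t) = winv t ++ winv s.
Proof. by rewrite /winv map_cat rev_cat. Qed.

Lemma winvK : involutive winv.
Proof. by move=> s; rewrite /winv map_rev revK -map_comp (eq_map invK) map_id. Qed.

Lemma reduce_winvK s t : reduce (winv s ++ s ++ t) = reduce t.
Proof.
elim: s t => //= e s IHs t.
by rewrite winv_cons -cats1 -catA reduce_cancel IHs.
Qed.

Lemma reduce_winvVK s t : reduce (s ++ winv s ++ t) = reduce t.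
Proof. by rewrite -{1}(winvK s) reduce_winvK. Qed.

Lemma reducedb_winv s : reducedb s -> reducedb (winv s).
Proof.
rewrite !reducedbE /winv rev_sorted sorted_map; apply: sub_sorted => a b /=.
by rewrite invK eq_sym.
Qed.

End ReducedWords.

Section MapReduce.
Variables (E1 E2 : eqType) (inv1 : E1 -> E1) (inv2 : E2 -> E2) (h : E1 -> E2).
Hypothesis h_inv : forall e, h (inv1 e) = inv2 (h e).

Lemma map_winv s : map h (winv inv1 s) = winv inv2 (map h s).
Proof. by rewrite /winv map_rev -!map_comp (eq_map h_inv). Qed.

Hypothesis h_inj : injective h.

Lemma map_red_cons e s : map h (red_cons inv1 e s) = red_cons inv2 (h e) (map h s).
Proof. by case: s => //= e' s; rewrite -h_inv inj_eq //; case: ifP. Qed.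

Lemma map_reduce s : map h (reduce inv1 s) = reduce inv2 (map h s).
Proof. by elim: s => //= e s <-; rewrite map_red_cons. Qed.

End MapReduce.

Lemma linvK n : involutive (@linv n).
Proof. by case=> i b; rewrite /linv negbK. Qed.

HB.instance Definition _ n :=
  Choice.copy (Fn n) {w : seq (letter n) | reducedb (@linv n) w}.

Section FreeGroupLaws.
Variable n : nat.
Local Notation F := (Fn n).
Local Notation reduce := (reduce (@linv n)).

Lemma val_Fmul (a b : F) : val (Fmul a b) = reduce (val a ++ val b).
Proof. by rewrite /Fmul insubdK // -topredE /= reducedb_reduce. Qed.

Lemma val_Finv (a : F) : val (Finv a) = winv (@linv n) (val a).
Proof. by rewrite /Finv insubdK // -topredE /=; apply/reducedb_winv/valP/linvK. Qed.

Lemma FmulA : associative (@Fmul n).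
Proof.
move=> a b c; apply: val_inj.
by rewrite !val_Fmul (reduce_catl (@linvK n)) reduce_catr catA.
Qed.

Lemma Fmul1l : left_id (Fone n) (@Fmul n).
Proof. by move=> a; apply: val_inj; rewrite val_Fmul reduce_id ?(valP a) ?linvK. Qed.

Lemma Fmul1r : right_id (Fone n) (@Fmul n).
Proof. by move=> a; apply: val_inj; rewrite val_Fmul cats0 reduce_id ?(valP a) ?linvK. Qed.

Lemma FmulVl : left_inverse (Fone n) (@Finv n) (@Fmul n).
Proof.
move=> a; apply: val_inj.
by rewrite val_Fmul val_Finv -[_ ++ _]cats0 -catA (reduce_winvK (@linvK n)).
Qed.

Lemma FmulVr : right_inverse (Fone n) (@Finv n) (@Fmul n).
Proof.
move=> a; apply: val_inj.
by rewrite val_Fmul val_Finv -[_ ++ _]cats0 -catA (reduce_winvVK (@linvK n)).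
Qed.

End FreeGroupLaws.

HB.instance Definition _ n :=
  isGroup.Build (Fn n) (@FmulA n) (@Fmul1l n) (@Fmul1r n) (@FmulVl n) (@FmulVr n).

Local Open Scope group_scope.

Lemma FmulE n : @Fmul n = *%g. Proof. by []. Qed.
Lemma FinvE n : @Finv n = inv. Proof. by []. Qed.
Lemma FoneE n : Fone n = 1. Proof. by []. Qed.
Definition FnE := (FmulE, FinvE, FoneE).

Section Morphisms.
Variables (G H : groupType) (f : G -> H).
Hypothesis fM : {morph f : x y / x * y}.

Lemma morph1 : f 1 = 1.
Proof. by apply: (@mulgI _ (f 1)); rewrite -fM !mulg1. Qed.

Lemma morphV : {morph f : x / x^-1}.
Proof. by move=> x; apply: (@mulgI _ (f x)); rewrite -fM !mulgV morph1. Qed.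

End Morphisms.

Section Generators.
Variable n : nat.
Local Notation F := (Fn n).

Definition letter_elt (l : letter n) : F := exist _ [:: l] (erefl true).
Definition gen (i : 'I_n) : F := letter_elt (i, true).

Lemma letter_eltV l : letter_elt (linv l) = (letter_elt l)^-1.
Proof. by apply: val_inj; rewrite -FinvE val_Finv. Qed.

Lemma letter_eltE l : letter_elt l = if l.2 then gen l.1 else (gen l.1)^-1.
Proof. by case: l => i [] //; rewrite -letter_eltV. Qed.

Lemma Fn_ind (P : F -> Prop) :
  P 1 -> (forall l a, P a -> P (letter_elt l * a)) -> forall a, P a.
Proof.
move=> P1 PM [s rs]; elim: s rs => [|l s IHs] rs.
  by rewrite (bool_irrelevance rs (erefl true)).
have rs' : reducedb (@linv n) s by move: rs; rewrite reducedb_cons => /andP[].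
have -> : exist _ (l :: s) rs = letter_elt l * exist _ s rs'.
  by apply: val_inj; rewrite -FmulE val_Fmul /= reduce_id // red_cons_reduced.
exact/PM/IHs.
Qed.

Lemma Fn_morph_eq (G : groupType) (f g : F -> G) :
    {morph f : a b / a * b} -> {morph g : a b / a * b} ->
  (forall i, f (gen i) = g (gen i)) -> f =1 g.
Proof.
move=> fM gM fg; apply: Fn_ind => [|l a fga]; first by rewrite !morph1.
by rewrite fM gM fga letter_eltE; case: ifP; rewrite ?morphV // fg.
Qed.

Definition gen_image (G : groupType) (g : 'I_n -> G) (l : letter n) : G :=
  if l.2 then g l.1 else (g l.1)^-1.

Definition free_ext (G : groupType) (g : 'I_n -> G) (a : F) : G :=
  \prod_(l <- val a) gen_image g l.

Lemma free_ext_morph (G : groupType) (g : 'I_n -> G) : {morph free_ext g : a b / a * b}.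
Proof.
have imgV l : gen_image g (linv l) = (gen_image g l)^-1.
  by case: l => i [] //=; rewrite /gen_image invgK.
have prod_red s : \prod_(l <- reduce (@linv n) s) gen_image g l = \prod_(l <- s) gen_image g l.
  elim: s => //= l s IHs; rewrite big_cons -IHs.
  case: (reduce (@linv n) s) => [|l' s'] /=; first by rewrite big_seq1 big_nil mulg1.
  by case: ifP => [/eqP-> | _]; rewrite !big_cons // imgV mulVKg.
by move=> a b; rewrite /free_ext -FmulE val_Fmul prod_red big_cat.
Qed.

Lemma free_ext_gen (G : groupType) (g : 'I_n -> G) i : free_ext g (gen i) = g i.
Proof. by rewrite /free_ext /= big_seq1. Qed.

End Generators.

Section Automorphisms.
Variable n : nat.
Local Notation F := (Fn n).

Lemma is_aut_morph (phi : F -> F) : is_aut phi -> {morph phi : a b / a * b}.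
Proof. by case. Qed.

Lemma is_aut_id : is_aut (@id F).
Proof. by split => //; exists id. Qed.

Lemma is_aut_comp (phi psi : F -> F) : is_aut phi -> is_aut psi -> is_aut (phi \o psi).
Proof.
move=> [phiM phiB] [psiM psiB]; split; last exact: bij_comp.
by move=> a b /=; rewrite psiM phiM.
Qed.

Lemma is_aut_inv (phi : F -> F) :
  is_aut phi -> exists psi, [/\ is_aut psi, cancel phi psi & cancel psi phi].
Proof.
move=> [phiM [psi phiK psiK]]; exists psi; split => //; split; last by exists phi.
by move=> a b; apply: (can_inj phiK); rewrite phiM !psiK.
Qed.

Definition transvection (i j : 'I_n) (b : bool) : F -> F :=
  free_ext (fun k => if k == i then gen i * (if b then gen j else (gen j)^-1) else gen k).

Lemma transvection_gen i j b k : transvection i j b (gen k) =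
  if k == i then gen i * (if b then gen j else (gen j)^-1) else gen k.
Proof. exact: free_ext_gen. Qed.

Lemma transvection_morph i j b : {morph transvection i j b : a c / a * c}.
Proof. exact: free_ext_morph. Qed.

Lemma transvectionK i j b : i != j -> cancel (transvection i j b) (transvection i j (~~ b)).
Proof.
move=> ij; have jNi : (j == i) = false by rewrite eq_sym (negPf ij).
apply: (@Fn_morph_eq n _ (transvection i j (~~ b) \o transvection i j b) id) => //.
  by move=> a c /=; rewrite !transvection_morph.
move=> k /=; rewrite transvection_gen.
case: eqP => [-> | /eqP/negPf kNi]; last by rewrite transvection_gen kNi.
rewrite transvection_morph !transvection_gen eqxx.
have trV c := morphV (transvection_morph i j c).
by case: b; rewrite /= ?trV transvection_gen jNi ?mulgK ?mulgVK.
Qed.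

Lemma transvection_aut i j b : i != j -> is_aut (transvection i j b).
Proof.
move=> ij; split; first exact: transvection_morph.
by exists (transvection i j (~~ b)); [|rewrite -{2}(negbK b)]; apply: transvectionK.
Qed.

End Automorphisms.

Section ZpHoms.
Variables n p : nat.
Local Notation F := (Fn n).
Local Open Scope ring_scope.
Import GRing.Theory.
Implicit Types (f g : F -> 'Z_p) (a b : F).

Lemma Zp_hom1 f : is_Zp_hom f -> f 1%g = 0.
Proof. by move=> fM; apply: (@addrI _ (f 1%g)); rewrite -fM addr0 FmulE mulg1. Qed.

Lemma Zp_homV f a : is_Zp_hom f -> f a^-1%g = - f a.
Proof. by move=> fM; apply: (@addrI _ (f a)); rewrite -fM addrN FmulE mulgV Zp_hom1. Qed.

Lemma Zp_homVM f a b : is_Zp_hom f -> f (a^-1 * b)%g = f b - f a.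
Proof. by move=> fM; rewrite fM Zp_homV // addrC. Qed.

Lemma Zp_homX f a k : is_Zp_hom f -> f (a ^+ k)%g = f a *+ k.
Proof.
move=> fM; elim: k => [|k IHk]; first by rewrite Zp_hom1.
by rewrite expgS fM IHk mulrS.
Qed.

Lemma Zp_hom_eq f g : is_Zp_hom f -> is_Zp_hom g ->
  (forall i, f (gen i) = g (gen i)) -> f =1 g.
Proof.
move=> fM gM fg; apply: Fn_ind => [|l a fga]; first by rewrite !Zp_hom1.
by rewrite fM gM fga letter_eltE; case: ifP; rewrite ?Zp_homV // fg.
Qed.

Lemma Zp_hom_comp f (phi : F -> F) :
  is_Zp_hom f -> {morph phi : a b / a * b}%g -> is_Zp_hom (f \o phi).
Proof. by move=> fM phiM a b /=; rewrite FmulE phiM fM. Qed.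

Lemma Zp_hom_gen_neq0 f : is_Zp_hom f -> (exists w, f w <> 0) -> exists i, f (gen i) != 0.
Proof.
move=> fM [w fw]; apply/existsP; apply: contraT; rewrite negb_exists => /forallP f0.
by case: fw; apply: (@Zp_hom_eq f (fun=> 0)) => // [a b|i]; [rewrite addr0 | apply/eqP/negPn].
Qed.

Hypothesis p_pr : prime p.

Lemma Zp_unit (z : 'Z_p) : z != 0 -> z \is a GRing.unit.
Proof.
move=> z0; have p_gt1 := prime_gt1 p_pr.
rewrite -(natr_Zp z) unitZpE // prime_coprime // gtnNdvd //.
  by rewrite lt0n; apply: contra z0 => /eqP z0; apply/eqP/val_inj.
by have := ltn_ord z; rewrite [X in (_ < X)%N -> _]Zp_cast.
Qed.

Lemma Zp_hom_onto f a (z : 'Z_p) : is_Zp_hom f -> f a != 0 -> f (a ^+ (z / f a)%R)%g = z.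
Proof. by move=> fM fa; rewrite Zp_homX // -mulr_natl natr_Zp divrK // Zp_unit. Qed.

End ZpHoms.

Section AutTransitivity.
Variables n p : nat.
Local Notation F := (Fn n).
Local Open Scope ring_scope.
Import GRing.Theory.
Implicit Types (f g : F -> 'Z_p).

Lemma Zp_hom_transvect f i j (z : 'Z_p) : is_Zp_hom f -> i != j ->
  exists al, is_aut al /\ forall k,
    f (al (gen k)) = if k == i then f (gen i) + z * f (gen j) else f (gen k).
Proof.
move=> fM ij; suff [al [alA alE]] : exists al, is_aut al /\ forall k,
    f (al (gen k)) = if k == i then f (gen i) + f (gen j) *+ z else f (gen k).
  by exists al; split => // k; rewrite alE -mulr_natl natr_Zp.
elim: (nat_of_ord z) => [|c [al [alA alE]]].
  by exists id; split => [|k]; [exact: is_aut_id | rewrite addr0; case: eqP => // ->].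
exists (al \o transvection i j true); split.
  by apply: is_aut_comp => //; apply: transvection_aut.
move=> k /=; rewrite transvection_gen.
case: (eqVneq k i) => [_|kNi]; last by rewrite alE (negPf kNi).
rewrite is_aut_morph // fM !alE eqxx eq_sym (negPf ij).
by rewrite mulrSr addrA.
Qed.

Lemma Zp_hom_clear_gens g i0 : is_Zp_hom g -> g (gen i0) = 1 ->
  exists al, [/\ is_aut al, g (al (gen i0)) = 1 &
                 forall k, k != i0 -> g (al (gen k)) = 0].
Proof.
move=> gM g1; suff [al [alA al1 al0]] : exists al, [/\ is_aut al, g (al (gen i0)) = 1 &
    forall k, k != i0 -> k \in enum 'I_n -> g (al (gen k)) = 0].
  by exists al; split => // k kNi; rewrite al0 ?mem_enum.
elim: (enum 'I_n) => [|k0 s [al [alA al1 al0]]].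
  by exists id; split => //; exact: is_aut_id.
case: (eqVneq k0 i0) => [-> | k0Ni].
  by exists al; split => // k kNi; rewrite in_cons (negPf kNi); apply: al0.
have galM := Zp_hom_comp gM (is_aut_morph alA).
have [be [beA beE]] := Zp_hom_transvect (- g (al (gen k0))) galM k0Ni.
exists (al \o be); split; first exact: is_aut_comp.
  by have := beE i0; rewrite /= eq_sym (negPf k0Ni) => ->.
move=> k kNi; rewrite in_cons; have := beE k; rewrite /= => ->.
case: eqP => [-> _ | _ /= ks]; first by rewrite al1 mulr1 addrN.
exact: al0.
Qed.

Hypothesis p_pr : prime p.

Lemma Zp_hom_normal_form f i0 i1 : i0 != i1 -> is_Zp_hom f -> (exists w, f w <> 0) ->
  exists al, is_aut al /\ forall k, f (al (gen k)) = (k == i0)%:R.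
Proof.
move=> i01 fM f_nz; have i10 : i1 != i0 by rewrite eq_sym.
have [a1 [a1A f1_nz]] : exists a1, is_aut a1 /\ f (a1 (gen i0)) != 0.
  have [k fk] := Zp_hom_gen_neq0 fM f_nz.
  case: (eqVneq (f (gen i0)) 0) => [f0|]; last by exists id; split => //; exact: is_aut_id.
  case: (eqVneq i0 k) => [-> | i0k]; first by exists id; split => //; exact: is_aut_id.
  have [a1 [a1A a1E]] := Zp_hom_transvect 1 fM i0k.
  by exists a1; split; rewrite // a1E eqxx f0 add0r mul1r.
set f1 := f \o a1; have f1M : is_Zp_hom f1 by apply: Zp_hom_comp => //; apply: is_aut_morph.
have [a2 [a2A a2E]] := Zp_hom_transvect ((1 - f1 (gen i1)) / f1 (gen i0)) f1M i10.
set f2 := f1 \o a2; have f2M : is_Zp_hom f2 by apply: Zp_hom_comp => //; apply: is_aut_morph.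
have f2_1 : f2 (gen i1) = 1 by rewrite /f2 /= a2E eqxx divrK ?Zp_unit // addrC subrK.
have [a3 [a3A a3E]] := Zp_hom_transvect (1 - f2 (gen i0)) f2M i01.
set f3 := f2 \o a3; have f3M : is_Zp_hom f3 by apply: Zp_hom_comp => //; apply: is_aut_morph.
have f3_1 : f3 (gen i0) = 1 by rewrite /f3 /= a3E eqxx f2_1 mulr1 addrC subrK.
have [a4 [a4A a4_1 a4_0]] := Zp_hom_clear_gens f3M f3_1.
exists (a1 \o (a2 \o (a3 \o a4))); split.
  by apply: is_aut_comp => //; apply: is_aut_comp => //; apply: is_aut_comp.
by move=> k; case: (eqVneq k i0) => [-> | kNi]; [exact: a4_1 | exact: a4_0].
Qed.

Lemma Zp_hom_aut_transitive f g : (1 < n)%N -> is_Zp_hom f -> is_Zp_hom g ->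
    (exists w, f w <> 0) -> (exists w, g w <> 0) ->
  exists chi, is_aut chi /\ forall w, f (chi w) = g w.
Proof.
move=> n_gt1 fM gM f_nz g_nz.
have i01 : Ordinal (ltnW n_gt1) != Ordinal n_gt1 by [].
have [al [alA alE]] := Zp_hom_normal_form i01 fM f_nz.
have [be [beA beE]] := Zp_hom_normal_form i01 gM g_nz.
have [be' [be'A _ be'K]] := is_aut_inv beA.
have fg : f \o al =1 g \o be.
  apply: Zp_hom_eq; try (apply: Zp_hom_comp => //; apply: is_aut_morph => //).
  by move=> i /=; rewrite alE beE.
exists (al \o be'); split; first exact: is_aut_comp.
by move=> w; have /= -> := fg (be' w); rewrite be'K.
Qed.

End AutTransitivity.

Lemma free_perm_order (T : finType) (s : {perm T}) : prime #|T| -> s != 1%g ->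
  (forall j x, (s ^+ j)%g x = x -> (s ^+ j)%g = 1%g) -> #[s]%g = #|T|.
Proof.
move=> T_pr s_neq1 s_free.
have orbit_card x : #|orbit 'P <[s]> x| = #[s]%g.
  have := card_orbit_stab 'P <[s]> x; suff -> : #|'C_<[s]>[x | 'P]| = 1%N by rewrite muln1.
  apply/eqP; rewrite -trivg_card1; apply/eqP/trivgP/subsetP => a /setIP[/cycleP[j ->]].
  by move/astab1P => /= sjx; rewrite inE (s_free j x).
have s_acts : [acts <[s]>, on [set: T] | 'P] by apply/actsP => a _ x; rewrite !inE.
have := acts_sum_card_orbit s_acts; rewrite cardsT (eq_bigr (fun=> #[s]%g)); last first.
  by move=> _ /imsetP[x _ ->]; apply: orbit_card.
rewrite sum_nat_const => card_T.
have /(primeP T_pr).2 /orP[|/eqP //] : (#[s]%g %| #|T|)%N by rewrite -card_T dvdn_mull.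
by rewrite order_eq1 (negPf s_neq1).
Qed.

Section NormalSubgroups.
Variables (n : nat) (N : Fn n -> Prop).
Hypothesis N_normal : is_normal N.
Implicit Types a b c g : Fn n.

Lemma normal1 : N 1.
Proof. by case: N_normal. Qed.

Lemma normalM a b : N a -> N b -> N (a * b).
Proof. by case: N_normal => _ NM _ _; apply: NM. Qed.

Lemma normalV a : N a -> N a^-1.
Proof. by case: N_normal => _ _ NV _; apply: NV. Qed.

Lemma normalVE a : N a^-1 <-> N a.
Proof. by split=> [/normalV|/normalV //]; rewrite invgK. Qed.

Lemma normalJ g a : N a -> N (g * a * g^-1).
Proof. by case: N_normal => _ _ _ NJ; apply: NJ. Qed.

Lemma normalJV g a : N a -> N (g^-1 * a * g).
Proof. by move=> /(normalJ g^-1); rewrite invgK. Qed.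

Definition same_coset a b := N (a^-1 * b).

Lemma same_coset_refl a : same_coset a a.
Proof. by rewrite /same_coset mulVg; exact: normal1. Qed.

Lemma same_coset_sym a b : same_coset a b -> same_coset b a.
Proof. by move=> /normalV; rewrite /same_coset invgM invgK. Qed.

Lemma same_coset_trans a b c : same_coset a b -> same_coset b c -> same_coset a c.
Proof. by move=> ab /(normalM ab); rewrite /same_coset !mulgA mulgK. Qed.

Lemma same_cosetMl c a b : same_coset (c * a) (c * b) <-> same_coset a b.
Proof. by rewrite /same_coset invgM -mulgA mulKg. Qed.

Lemma same_cosetM a b c d :
  same_coset a b -> same_coset c d -> same_coset (a * c) (b * d).
Proof.
move=> /(normalJV c) ab cd; have := normalM ab cd.
by rewrite /same_coset invgM !mulgA mulgK.
Qed.

End NormalSubgroups.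

Section IndexPrimeHom.
Variables (n p : nat) (N : Fn n -> Prop) (t : Fn n).
Hypotheses (p_pr : prime p) (N_normal : is_normal N) (N_index : has_index N p).
Hypothesis tN : ~ N t.
Local Notation F := (Fn n).

Let rep : 'I_p -> F := sval (cid N_index).
Let repP := svalP (cid N_index).

Lemma coset_rep_inj i j : same_coset N (rep i) (rep j) -> i = j.
Proof. by case: repP => _ rep_inj _; apply: rep_inj. Qed.

Lemma coset_rep_cover w : exists i, same_coset N w (rep i).
Proof. by case: repP => _ _; apply. Qed.

Definition coset_index (w : F) : 'I_p := sval (cid (coset_rep_cover w)).

Lemma coset_indexP w : same_coset N w (rep (coset_index w)).
Proof. exact: svalP (cid (coset_rep_cover w)). Qed.

Lemma coset_index_eq a b : coset_index a = coset_index b <-> same_coset N a b.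
Proof.
have cT := same_coset_trans N_normal; have cS := same_coset_sym N_normal.
split=> [ab_eq | ab].
  by apply: cT (coset_indexP a) _; rewrite ab_eq; apply/cS/coset_indexP.
by apply: coset_rep_inj; apply: cT (cS _ _ (coset_indexP a)) (cT _ _ _ ab (coset_indexP b)).
Qed.

Lemma coset_index_rep i : coset_index (rep i) = i.
Proof. by apply: coset_rep_inj; apply: (same_coset_sym N_normal); apply: coset_indexP. Qed.

Lemma coset_shift_inj : injective (fun i => coset_index (t * rep i)).
Proof.
move=> i j /coset_index_eq /(same_cosetMl N) /coset_rep_inj; exact.
Qed.

Definition coset_shift : {perm 'I_p} := perm coset_shift_inj.

Lemma coset_indexX j w : coset_index (t ^+ j * w) = (coset_shift ^+ j) (coset_index w).
Proof.
elim: j => [|j IHj]; first by rewrite mul1g perm1.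
rewrite [in RHS]expgSr permM -IHj permE expgS -mulgA.
exact/coset_index_eq/(same_cosetMl N)/coset_indexP.
Qed.

Lemma coset_shift_free j x : (coset_shift ^+ j) x = x -> coset_shift ^+ j = 1.
Proof.
rewrite -(coset_index_rep x) -coset_indexX => /coset_index_eq.
rewrite /same_coset invgM => /(normalJ N_normal (rep x)).
rewrite !mulgA mulgK mulgV mul1g => tjN.
apply/permP => y; rewrite perm1 -(coset_index_rep y) -coset_indexX.
by apply/coset_index_eq; rewrite /same_coset invgM; apply: normalJV.
Qed.

Lemma coset_shift_neq1 : coset_shift != 1.
Proof.
apply/eqP => shift1; have := coset_indexX 1 1; rewrite shift1 expg1 perm1 mulg1.
by move/coset_index_eq; rewrite /same_coset mulg1 normalVE.
Qed.

Lemma order_coset_shift : #[coset_shift] = p.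
Proof.
by rewrite -[RHS]card_ord; apply: free_perm_order; rewrite ?card_ord //;
  [apply: coset_shift_neq1 | apply: coset_shift_free].
Qed.

Let x0 := coset_index 1.

Lemma coset_orbit_inj : injective (fun j : 'I_p => (coset_shift ^+ j) x0).
Proof.
suff le_inj (i j : 'I_p) : i <= j -> (coset_shift ^+ i) x0 = (coset_shift ^+ j) x0 -> i = j.
  by move=> i j; case: (leqP i j) => [/le_inj // | /ltnW/le_inj ij /esym/ij].
move=> ij sij; have: (coset_shift ^+ (j - i)) x0 = x0.
  by apply: (@perm_inj _ (coset_shift ^+ i)); rewrite -permM -expgD subnK.
move/coset_shift_free => sji1.
have /eqP : coset_shift ^+ i = coset_shift ^+ j by rewrite -(subnK ij) expgD sji1 mul1g.
by rewrite eq_expg_mod_order order_coset_shift !modn_small // => /eqP/val_inj.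
Qed.

Definition coset_pos (w : F) : 'I_p := invF coset_orbit_inj (coset_index w).

Lemma coset_pos_same_coset w : same_coset N w (t ^+ coset_pos w).
Proof.
apply/coset_index_eq; rewrite -[t ^+ _]mulg1 coset_indexX.
by rewrite (f_invF coset_orbit_inj).
Qed.

Lemma coset_pos_eq w (j : 'I_p) : same_coset N w (t ^+ j) -> coset_pos w = j.
Proof.
move/coset_index_eq; rewrite -[t ^+ _]mulg1 coset_indexX /coset_pos => ->.
exact: invF_f.
Qed.

Lemma same_coset_expg_mod k : same_coset N (t ^+ k) (t ^+ (k %% p)).
Proof.
apply/coset_index_eq; rewrite -[t ^+ k]mulg1 -[t ^+ (k %% p)]mulg1 !coset_indexX.
by rewrite -(expg_mod_order coset_shift k) order_coset_shift.
Qed.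

Definition index_hom (w : F) : 'Z_p := (coset_pos w)%:R%R.

Lemma val_index_hom w : index_hom w = coset_pos w :> nat.
Proof. by rewrite val_Zp_nat ?prime_gt1 // modn_small. Qed.

Lemma index_hom_morph : is_Zp_hom index_hom.
Proof.
move=> a b; have p_gt0 := prime_gt0 p_pr.
have ab := same_cosetM N_normal (coset_pos_same_coset a) (coset_pos_same_coset b).
rewrite -expgD in ab; have := same_coset_trans N_normal ab (same_coset_expg_mod _).
rewrite -[_ %% p]/(nat_of_ord (Ordinal (ltn_pmod _ p_gt0))) => /coset_pos_eq.
by rewrite /index_hom FmulE => -> /=; rewrite -GRing.natrD Zp_nat_mod // prime_gt1.
Qed.

Lemma index_hom_ker w : index_hom w = 0%R <-> N w.
Proof.
have p_gt0 := prime_gt0 p_pr; split=> [hw0 | Nw].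
  have := coset_pos_same_coset w; have := val_index_hom w; rewrite hw0 => <-.
  by rewrite /same_coset mulg1 normalVE.
rewrite /index_hom; suff -> : coset_pos w = Ordinal p_gt0 by [].
by apply: coset_pos_eq; rewrite /same_coset mulg1 normalVE.
Qed.

Lemma index_hom_t : index_hom t = 1%R.
Proof.
rewrite /index_hom; suff -> : coset_pos t = Ordinal (prime_gt1 p_pr) by [].
by apply: coset_pos_eq; rewrite expg1; apply: same_coset_refl.
Qed.

End IndexPrimeHom.

Lemma index_prime_hom n p (N : Fn n -> Prop) t :
  prime p -> is_normal N -> has_index N p -> ~ N t ->
  exists f : Fn n -> 'Z_p, [/\ is_Zp_hom f, forall w, f w = 0%R <-> N w & f t = 1%R].
Proof.
move=> p_pr N_normal N_index tN; exists (index_hom p_pr N_normal N_index tN).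
by split; [apply: index_hom_morph | apply: index_hom_ker | apply: index_hom_t].
Qed.

Section ZpHomFibers.
Variables (n p : nat) (f : Fn n -> 'Z_p).
Hypotheses (p_pr : prime p) (fM : is_Zp_hom f) (f_nz : exists w, f w <> 0%R).
Local Open Scope ring_scope.
Import GRing.Theory.

Lemma Zp_hom_ker_normal : is_normal (fun w => f w = 0).
Proof.
rewrite /is_normal !FnE; split=> [|a b fa fb|a fa|g a fa].
- exact: Zp_hom1.
- by rewrite fM fa fb addr0.
- by rewrite Zp_homV // fa oppr0.
by rewrite !fM fa addr0 Zp_homV // addrN.
Qed.

Lemma Zp_hom_onto_elt (z : 'Z_p) : exists w, f w = z.
Proof.
have [a /eqP fa] := f_nz.
by exists (a ^+ (z / f a)%R)%g; apply: (Zp_hom_onto p_pr z fM fa).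
Qed.

Lemma Zp_hom_ker_index : has_index (fun w => f w = 0) p.
Proof.
have p_gt1 := prime_gt1 p_pr.
have [rep repP] := choice (fun i : 'I_p => Zp_hom_onto_elt i%:R).
exists rep; split=> // [i j | y _].
  rewrite FnE Zp_homVM // !repP => /eqP; rewrite subr_eq0 => /eqP/(congr1 val) /=.
  by rewrite !val_Zp_nat // !modn_small // => /val_inj.
have fy_lt_p : f y < p by rewrite -[X in _ < X]Zp_cast ?ltn_ord.
by exists (Ordinal fy_lt_p); rewrite FnE Zp_homVM // repP natr_Zp subrr.
Qed.

Lemma Zp_hom_fiber1_coset :
  is_coset (fun w => f w = 0) (fun w => f w = 1) /\ ~ (forall w, f w = 1 <-> f w = 0).
Proof.
have [t ft] := Zp_hom_onto_elt 1; split.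
  exists t => w; rewrite FnE Zp_homVM // ft.
  by split=> [-> | /eqP]; [rewrite subrr | rewrite subr_eq0 => /eqP].
by move/(_ t) => [/(_ ft) + _]; rewrite ft => /eqP; rewrite oner_eq0.
Qed.

Lemma Zp_hom_eq_fibers g : is_Zp_hom g ->
  (forall w, f w = 0 <-> g w = 0) -> (forall w, f w = 1 <-> g w = 1) -> f =1 g.
Proof.
move=> gM fg0 fg1 w; have [t ft] := Zp_hom_onto_elt 1; have /fg1 gt := ft.
have tX h : is_Zp_hom h -> h t = 1 -> h (t ^+ f w)%g = f w.
  by move=> hM ht; rewrite Zp_homX // ht -mulr_natl natr_Zp mulr1.
have : f ((t ^+ f w)^-1 * w)%g = 0 by rewrite Zp_homVM // tX // subrr.
by move/fg0; rewrite Zp_homVM // tX // => /eqP; rewrite subr_eq0 => /eqP.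
Qed.

End ZpHomFibers.

Section Paths.
Variable G : graph.

Lemma is_path_cons (a b : gV G) e s :
  is_path a b (e :: s) = (gorg e == a) && is_path (gter e) b s.
Proof. by case: s => [|e' s] //=; rewrite -!andbA. Qed.

Lemma is_path_cat (a b c : gV G) s t :
  is_path a b s -> is_path b c t -> is_path a c (s ++ t).
Proof.
elim: s a => [a /eqP-> //|e s IHs a]; rewrite cat_cons !is_path_cons.
by case/andP=> -> /IHs; apply.
Qed.

Lemma is_path_winv (a b : gV G) s : involutive (@ginv G) ->
  is_path a b s -> is_path b a (winv (@ginv G) s).
Proof.
move=> invK; elim: s a => [a /eqP->|e s IHs a]; first exact: eqxx.
rewrite is_path_cons winv_cons -cats1 => /andP[/eqP<- /IHs ps].
by apply: is_path_cat ps _; rewrite /= /gter invK !eqxx.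
Qed.

End Paths.

Lemma is_path_map (G H : graph) (hV : gV G -> gV H) (hE : gE G -> gE H) :
    (forall e, gorg (hE e) = hV (gorg e) /\ hE (ginv e) = ginv (hE e)) ->
  forall a b s, is_path a b s -> is_path (hV a) (hV b) (map hE s).
Proof.
move=> hGH a b s; elim: s a => [a /eqP->|e s IHs a]; first exact: eqxx.
rewrite map_cons !is_path_cons => /andP[/eqP<- ps]; have [-> hinv] := hGH e.
by rewrite eqxx /gter -hinv (proj1 (hGH _)) IHs.
Qed.

Section MarkedGraphEquivalence.
Variable n : nat.
Implicit Types x y z : mgraph n.

(* The only consequences of [is_cv_point] that the argument uses. *)
Definition wf_mgraph y :=
  involutive (@ginv (mG y)) /\ forall w, reducedb (@ginv (mG y)) (mmark y w).

Lemma wf_cv_point x : is_cv_point x -> wf_mgraph x.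
Proof.
case=> inv_fp _ _ _ [rloop _ _ _]; split=> [e | w]; first by case: (inv_fp e).
by case/andP: (rloop w).
Qed.

Lemma wf_act y phi : wf_mgraph y -> wf_mgraph (cv_act y phi).
Proof. by case=> invK red_mark; split=> //= w; apply: red_mark. Qed.

Lemma wf_mg_equiv y z : wf_mgraph y -> mg_equiv y z -> wf_mgraph z.
Proof.
case=> invK _ [hV [hE [gam [[_ [hE' hEK hE'K]] hGH _ _ mark_z]]]]; split=> [e | w].
  by rewrite -(hE'K e) -!(proj2 (hGH _)) invK.
by rewrite mark_z; apply: reducedb_reduce.
Qed.

Lemma cv_act_id y : cv_act y id = y.
Proof. by case: y. Qed.

Lemma mg_equiv_act y z phi : mg_equiv y z -> mg_equiv (cv_act y phi) (cv_act z phi).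
Proof.
case=> hV [hE [gam [hB hGH hlen hpath mark_z]]]; exists hV, hE, gam.
by split=> // w; apply: mark_z.
Qed.

Lemma mg_equiv_marking y phi psi : wf_mgraph y ->
  (forall w, mmark y (phi w) = mmark y (psi w)) -> mg_equiv (cv_act y phi) (cv_act y psi).
Proof.
case=> _ red_mark mark_eq; exists id, id, [::]; split=> //=.
  by split; exists id.
by move=> w; rewrite cats0 map_id mark_eq reduce_id.
Qed.

Lemma mg_equiv_refl y : wf_mgraph y -> mg_equiv y y.
Proof.
by move=> wf_y; have := @mg_equiv_marking y id id wf_y (fun=> erefl); rewrite cv_act_id.
Qed.

Lemma mg_equiv_trans y z w : wf_mgraph y -> mg_equiv y z -> mg_equiv z w -> mg_equiv y w.
Proof.
move=> wf_y yz zw; have wf_w := wf_mg_equiv (wf_mg_equiv wf_y yz) zw.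
case: yz => hV [hE [gam [[hVB hEB] hGH hlen hpath mark_z]]].
case: zw => kV [kE [del [[kVB kEB] kGH klen kpath mark_w]]].
have kE_inj : injective kE by case: kEB => kE' kEK _; apply: can_inj kEK.
exists (kV \o hV), (kE \o hE), (del ++ map kE gam); split.
- by split; apply: bij_comp.
- move=> e /=; have [ho hi] := hGH e; have [ko _] := kGH (hE e).
  by rewrite ko ho hi (proj2 (kGH _)).
- by move=> e /=; rewrite klen hlen.
- exact: is_path_cat kpath (is_path_map kGH hpath).
move=> u; rewrite mark_w mark_z (map_reduce (fun e => proj2 (kGH e)) kE_inj).
rewrite (reduce_catm wf_w.1) !map_cat (map_winv (fun e => proj2 (kGH e))) winv_cat.
by rewrite -map_comp -!catA.
Qed.

Lemma mg_equiv_sym y z : wf_mgraph y -> mg_equiv y z -> mg_equiv z y.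
Proof.
move=> [invK red_mark] yz; have [invK_z _] := wf_mg_equiv (conj invK red_mark) yz.
case: yz => hV [hE [gam [[[hV' hVK hV'K] [hE' hEK hE'K]] hGH hlen hpath mark_z]]].
have hGH' e : gorg (hE' e) = hV' (gorg e) /\ hE' (ginv e) = ginv (hE' e).
  rewrite -(hE'K e); have [ho hi] := hGH (hE' e).
  by rewrite hEK ho hVK -hi hEK.
have hE'_inj : injective hE' by apply: can_inj hE'K.
exists hV', hE', (map hE' (winv (@ginv (mG z)) gam)); split.
- by split; [exists hV | exists hE].
- exact: hGH'.
- by move=> e; rewrite -{2}(hE'K e) hlen.
- by rewrite -{1}(hVK (mbase y)); apply/(is_path_map hGH')/is_path_winv.
move=> w; rewrite mark_z (map_reduce (fun e => proj2 (hGH' e)) hE'_inj).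
rewrite (reduce_catm invK) !map_cat -map_comp (eq_map hEK) map_id.
rewrite (map_winv (fun e => proj2 (hGH' e))); set G0 := map hE' gam.
rewrite winvK // -!catA reduce_winvK //.
have G0K : reduce (@ginv (mG y)) (winv (@ginv (mG y)) G0 ++ G0) = [::].
  by rewrite -[_ ++ G0]cats0 -catA reduce_winvK.
by rewrite -reduce_catr G0K cats0 reduce_id.
Qed.

End MarkedGraphEquivalence.

Section CountingClasses.
Variables (X : Type) (S : X -> Prop) (r : X -> X -> Prop).
Hypothesis r_refl : forall x, S x -> r x x.
Hypothesis r_sym : forall x y, S x -> S y -> r x y -> r y x.
Hypothesis r_trans : forall x y z, S x -> S y -> S z -> r x y -> r y z -> r x z.

Lemma num_classes_of_inj (T : finType) (code : X -> T) :
  (forall x y, S x -> S y -> code x = code y -> x = y) -> exists k, num_classes S r k.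
Proof.
move=> code_inj.
(* Each class is represented by its element whose code has the least rank. *)
pose least x := S x /\ forall y, S y -> r y x -> enum_rank (code x) <= enum_rank (code y).
pose B := [set t | `[< exists2 x, least x & code x = t >]].
have rep_ex (i : 'I_#|B|) : exists x, least x /\ code x = enum_val i.
  by have := enum_valP i; rewrite inE => /asboolP[x]; exists x.
have [rep repP] := choice rep_ex.
exists #|B|, rep; split=> [i | i j rij | y Sy]; first by case: (repP i) => [[]].
  have [[Si least_i] ci] := repP i; have [[Sj least_j] cj] := repP j.
  have := least_j _ Si rij; have := least_i _ Sj (r_sym Si Sj rij).
  rewrite ci cj => le_ij le_ji.
  have /eqP/val_inj : enum_rank (enum_val i) == enum_rank (enum_val j) :> nat.
    by rewrite eqn_leq le_ij.
  by move/enum_rank_inj/enum_val_inj.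
pose C t := `[< exists2 z, S z /\ r y z & code z = t >].
have Cy : C (code y) by apply/asboolP; exists y; split=> //; apply: r_refl.
case: (arg_minnP (fun t => enum_rank t) Cy) => t /asboolP[z [Sz yz] cz] t_min.
have Bt : t \in B.
  rewrite inE; apply/asboolP; exists z => //; split=> // y' Sy' y'z; rewrite cz.
  by apply: t_min; apply/asboolP; exists y'; split=> //; apply: r_trans yz (r_sym _ _ y'z).
exists (enum_rank_in Bt t); have [[Si _] ci] := repP (enum_rank_in Bt t).
by rewrite enum_rankK_in // in ci; rewrite (code_inj _ _ Si Sz (etrans ci (esym cz))).
Qed.

End CountingClasses.

Lemma num_classes_transfer (X Y : Type) (S : X -> Prop) (r : X -> X -> Prop)
    (S' : Y -> Prop) (r' : Y -> Y -> Prop) (h : X -> Y) k :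
  num_classes S r k ->
  (forall x, S x -> S' (h x)) ->
  (forall x y, S x -> S y -> r' (h x) (h y) -> r x y) ->
  (forall y, S' y -> exists x, S x /\ r' y (h x)) ->
  (forall x y, S x -> S y -> r x y -> r' (h x) (h y)) ->
  (forall x y z, S' x -> S' y -> S' z -> r' x y -> r' y z -> r' x z) ->
  num_classes S' r' k.
Proof.
move=> [rep [S_rep rep_inj rep_cover]] hS hr h_cover rh r'_trans.
exists (h \o rep); split=> [i | i j /hr rij | y S'y]; first exact: hS.
  exact/rep_inj/rij.
have [x [Sx y_hx]] := h_cover y S'y; have [i xi] := rep_cover x Sx.
by exists i; apply: r'_trans y_hx (rh _ _ Sx (S_rep i) xi) => //; apply: hS.
Qed.

Section Stabiliser.
Variables (n : nat) (x : mgraph n).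
Hypothesis wf_x : wf_mgraph x.

Lemma in_stab_id : in_stab x id.
Proof. by split; [exact: is_aut_id | rewrite cv_act_id; apply: mg_equiv_refl]. Qed.

Lemma in_stab_comp phi psi : in_stab x phi -> in_stab x psi -> in_stab x (phi \o psi).
Proof.
move=> [phiA phix] [psiA psix]; split; first exact: is_aut_comp.
by apply: mg_equiv_trans (mg_equiv_act psi phix) psix; do 2 apply: wf_act.
Qed.

Lemma in_stab_inv phi psi : in_stab x phi -> is_aut psi -> cancel psi phi -> in_stab x psi.
Proof.
move=> [_ phix] psiA psiK; split=> //; apply: mg_equiv_sym => //.
apply: mg_equiv_trans (mg_equiv_act psi phix) => //.
by rewrite -[x in mg_equiv x]cv_act_id; apply: mg_equiv_marking => // w /=; rewrite psiK.
Qed.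

End Stabiliser.

Section OrbitCorrespondence.
Variables (n p : nat) (x : mgraph n) (N : Fn n -> Prop).
Hypotheses (n_gt1 : 1 < n) (p_pr : prime p) (x_cv : is_cv_point x).
Hypotheses (N_normal : is_normal N) (N_index : has_index N p).
Local Notation F := (Fn n).
Import GRing.Theory.

Let wf_x := wf_cv_point x_cv.

Definition nontriv_hom (f : F -> 'Z_p) := is_Zp_hom f /\ exists w, f w <> 0%R.

Definition stab_related (f g : F -> 'Z_p) :=
  exists phi, in_stab x phi /\ forall w, g w = f (phi w).

Lemma hom_classes_finite : exists k, num_classes nontriv_hom stab_related k.
Proof.
have code_inj (f g : F -> 'Z_p) : nontriv_hom f -> nontriv_hom g ->
    [ffun i => f (gen i)] = [ffun i => g (gen i)] -> f = g.
  move=> [fM _] [gM _] fg; apply: funext; apply: Zp_hom_eq => // i.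
  by have := congr1 (fun h : {ffun 'I_n -> 'Z_p} => h i) fg; rewrite !ffunE.
apply: (num_classes_of_inj _ _ _ code_inj).
- by move=> f _; exists id; split=> //; apply: in_stab_id.
- move=> f g _ _ [phi [phi_stab fg]]; have [psi [psiA phiK psiK]] := is_aut_inv phi_stab.1.
  by exists psi; split=> [|w]; [apply: in_stab_inv phi_stab psiA psiK | rewrite fg psiK].
move=> f g h _ _ _ [phi [phi_stab fg]] [psi [psi_stab gh]].
by exists (phi \o psi); split=> [|w]; [apply: in_stab_comp | rewrite gh fg].
Qed.

Lemma N_nontriv : exists t, ~ N t.
Proof.
have p_gt1 := prime_gt1 p_pr; case: N_index => rep [_ rep_inj _].
exists ((rep (Ordinal (ltnW p_gt1)))^-1 * rep (Ordinal p_gt1))%g.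
by move/rep_inj/(congr1 val).
Qed.

Lemma N_hom_ex : exists fN : F -> 'Z_p,
  [/\ is_Zp_hom fN, forall w, fN w = 0%R <-> N w & exists w, fN w <> 0%R].
Proof.
have [t tN] := N_nontriv; have [f [fM fN ft]] := index_prime_hom p_pr N_normal N_index tN.
by exists f; split=> //; exists t; rewrite ft; apply/eqP/oner_neq0.
Qed.

Let fN := sval (cid N_hom_ex).
Let fN_morph : is_Zp_hom fN. Proof. by case: (svalP (cid N_hom_ex)). Qed.
Let fN_ker w : fN w = 0%R <-> N w. Proof. by case: (svalP (cid N_hom_ex)). Qed.
Let fN_nz : exists w, fN w <> 0%R. Proof. by case: (svalP (cid N_hom_ex)). Qed.

Lemma in_A_fN a : in_A N a <-> is_aut a /\ forall w, fN (a w) = fN w.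
Proof.
split=> [[aA a_cosets] | [aA fNa]]; split=> //; last first.
  by move=> t w; rewrite -!fN_ker !FnE !Zp_homVM // fNa.
move=> w; have := a_cosets w w; rewrite -!fN_ker !FnE !Zp_homVM // subrr.
by case=> _ /(_ erefl)/eqP; rewrite subr_eq0 => /eqP.
Qed.

Lemma hom_aut_ex f : exists chi, nontriv_hom f -> is_aut chi /\ forall w, f (chi w) = fN w.
Proof.
case: (pselect (nontriv_hom f)) => [[fM f_nz] | f_triv]; last by exists id => /f_triv.
have [chi chiP] := Zp_hom_aut_transitive p_pr n_gt1 fM fN_morph f_nz fN_nz.
by exists chi.
Qed.

Definition hom_aut f := sval (cid (hom_aut_ex f)).

Lemma hom_autP f : nontriv_hom f -> is_aut (hom_aut f) /\ forall w, f (hom_aut f w) = fN w.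
Proof. exact: svalP (cid (hom_aut_ex f)). Qed.

Definition in_cv_orbit y := exists phi, is_aut phi /\ mg_equiv (cv_act x phi) y.

Definition A_related y z := exists phi, in_A N phi /\ mg_equiv (cv_act y phi) z.

Lemma wf_in_cv_orbit y : in_cv_orbit y -> wf_mgraph y.
Proof. by case=> phi [_ xy]; apply: wf_mg_equiv xy; apply: wf_act. Qed.

Lemma A_related_stab f g : nontriv_hom f -> nontriv_hom g ->
  A_related (cv_act x (hom_aut f)) (cv_act x (hom_aut g)) -> stab_related f g.
Proof.
move=> /hom_autP[chifA chifE] /hom_autP[chigA chigE] [a [/in_A_fN[aA fNa] xfg]].
have [chig' [chig'A _ chig'K]] := is_aut_inv chigA.
exists (hom_aut f \o (a \o chig')); split=> [|w]; last by rewrite /= chifE fNa -chigE chig'K.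
split; first by apply: is_aut_comp => //; apply: is_aut_comp.
apply: mg_equiv_trans (mg_equiv_act chig' xfg) _; first by do 3 apply: wf_act.
rewrite -[X in mg_equiv _ X]cv_act_id.
by apply: (@mg_equiv_marking _ x (hom_aut g \o chig')) => // w /=; rewrite chig'K.
Qed.

Lemma stab_A_related f g : nontriv_hom f -> nontriv_hom g ->
  stab_related f g -> A_related (cv_act x (hom_aut f)) (cv_act x (hom_aut g)).
Proof.
move=> /hom_autP[chifA chifE] /hom_autP[chigA chigE] [s [s_stab fg]].
have [chif' [chif'A _ chif'K]] := is_aut_inv chifA.
exists (chif' \o (s \o hom_aut g)); split.
  apply/in_A_fN; split.
    by apply: is_aut_comp => //; apply: is_aut_comp => //; case: s_stab.
  by move=> w /=; rewrite -chifE chif'K -fg chigE.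
apply: mg_equiv_trans (mg_equiv_act (hom_aut g) s_stab.2); first by do 2 apply: wf_act.
set a := chif' \o (s \o hom_aut g).
by apply: (@mg_equiv_marking _ x (hom_aut f \o a) (s \o hom_aut g)) => // w /=; rewrite chif'K.
Qed.

Lemma cv_orbit_A_related_hom y :
  in_cv_orbit y -> exists f, nontriv_hom f /\ A_related y (cv_act x (hom_aut f)).
Proof.
move=> y_orb; have wf_y := wf_in_cv_orbit y_orb; case: y_orb => psi [psiA xy].
have [psi' [psi'A psiK psi'K]] := is_aut_inv psiA.
have f_nontriv : nontriv_hom (fN \o psi').
  split; first by apply: Zp_hom_comp => //; apply: is_aut_morph.
  by have [w fNw] := fN_nz; exists (psi w); rewrite /= psiK.
exists (fN \o psi'); split=> //; have [chiA chiE] := hom_autP f_nontriv.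
exists (psi' \o hom_aut (fN \o psi')); split.
  by apply/in_A_fN; split=> [|w]; [apply: is_aut_comp | apply: chiE].
apply: mg_equiv_trans (mg_equiv_sym _ (mg_equiv_act (psi' \o hom_aut _) xy)) _.
- exact: wf_act.
- by do 2 apply: wf_act.
set chi := hom_aut (fN \o psi').
by apply: (@mg_equiv_marking _ x (psi \o (psi' \o chi)) chi) => // w /=; rewrite psi'K.
Qed.

Lemma A_related_trans y z w : in_cv_orbit y -> in_cv_orbit z -> in_cv_orbit w ->
  A_related y z -> A_related z w -> A_related y w.
Proof.
move=> /wf_in_cv_orbit wf_y _ _ [a [[aA a_cosets] yz]] [b [[bA b_cosets] zw]].
exists (a \o b); split.
  split=> [|t u /=]; first exact: is_aut_comp.
  exact: iff_trans (a_cosets t (b u)) (b_cosets t u).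
by apply: mg_equiv_trans (mg_equiv_act b yz) zw; do 2 apply: wf_act.
Qed.

Lemma cv_orbit_classes k :
  num_classes nontriv_hom stab_related k -> num_classes in_cv_orbit A_related k.
Proof.
move=> hom_classes.
apply: (num_classes_transfer hom_classes (h := fun f => cv_act x (hom_aut f))).
- move=> f /hom_autP[chiA _]; exists (hom_aut f); split=> //.
  by apply: mg_equiv_refl; apply: wf_act.
- exact: A_related_stab.
- exact: cv_orbit_A_related_hom.
- exact: stab_A_related.
- exact: A_related_trans.
Qed.

Definition coset_pair (P : (F -> Prop) * (F -> Prop)) :=
  [/\ is_normal P.1, has_index P.1 p, is_coset P.1 P.2 & ~ (forall w, P.2 w <-> P.1 w)].

Definition pair_related (P Q : (F -> Prop) * (F -> Prop)) := exists phi, in_stab x phi /\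
  (forall w, Q.1 w <-> P.1 (phi w)) /\ (forall w, Q.2 w <-> P.2 (phi w)).

Definition hom_fibers (f : F -> 'Z_p) : (F -> Prop) * (F -> Prop) :=
  (fun w => f w = 0%R, fun w => f w = 1%R).

Lemma coset_pair_hom P :
  coset_pair P -> exists f, nontriv_hom f /\ pair_related P (hom_fibers f).
Proof.
case: P => K C [/= K_normal K_index [t Ct] CK].
have tK : ~ K t.
  move=> Kt; apply: CK => w; rewrite Ct FnE; split=> [/(normalM K_normal Kt) | Kw].
    by rewrite mulKVg.
  by apply: normalM => //; apply: normalV.
have [f [fM fK ft]] := index_prime_hom p_pr K_normal K_index tK.
exists f; split; first by split=> //; exists t; rewrite ft; apply/eqP/oner_neq0.
exists id; split; first exact: in_stab_id.
split=> w /=; first exact: fK.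
rewrite Ct -fK FnE Zp_homVM // ft; split=> [-> | /eqP]; first exact: subrr.
by rewrite subr_eq0 => /eqP.
Qed.

Lemma coset_pair_classes k :
  num_classes nontriv_hom stab_related k -> num_classes coset_pair pair_related k.
Proof.
move=> hom_classes; apply: (num_classes_transfer hom_classes (h := hom_fibers)).
- move=> f [fM f_nz]; have [fib1_coset fib1_neq] := Zp_hom_fiber1_coset p_pr fM f_nz.
  by split=> //; [apply: (Zp_hom_ker_normal fM) | apply: (Zp_hom_ker_index p_pr fM f_nz)].
- move=> f g [fM _] [gM g_nz] [phi [phi_stab [fg0 fg1]]]; exists phi; split=> // w.
  have fphiM := Zp_hom_comp fM (is_aut_morph phi_stab.1).
  exact: (Zp_hom_eq_fibers p_pr gM g_nz fphiM).
- exact: coset_pair_hom.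
- by move=> f g _ _ [phi [phi_stab fg]]; exists phi; split=> //; split=> w /=; rewrite fg.
move=> P Q R _ _ _ [phi [phi_stab [PQ1 PQ2]]] [psi [psi_stab [QR1 QR2]]].
exists (phi \o psi); split; first exact: in_stab_comp.
by split=> w; [apply: iff_trans (QR1 w) (PQ1 _) | apply: iff_trans (QR2 w) (PQ2 _)].
Qed.

End OrbitCorrespondence.

Theorem lemma6p6 (n p : nat) (x : mgraph n) (N : Fn n -> Prop) :
  2 <= n -> prime p -> is_cv_point x ->
  is_normal N -> has_index N p ->
  exists k : nat,
    [/\ (* (a) A-orbits of points in the Out(F_n)-orbit of x *)
        num_classes
          (fun y : mgraph n => exists phi, is_aut phi /\ mg_equiv (cv_act x phi) y)
          (fun y z => exists phi, in_A N phi /\ mg_equiv (cv_act y phi) z) k,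
        (* (b) Out(F_n)_x-orbits of pairs (N', tN'), tN' <> N' *)
        num_classes
          (fun P : (Fn n -> Prop) * (Fn n -> Prop) =>
             [/\ is_normal P.1, has_index P.1 p, is_coset P.1 P.2 &
                 ~ (forall w, P.2 w <-> P.1 w)])
          (fun P Q => exists phi, in_stab x phi /\
             (forall w, Q.1 w <-> P.1 (phi w)) /\
             (forall w, Q.2 w <-> P.2 (phi w))) k &
        (* (c) Out(F_n)_x-orbits of non-trivial homs F_n -> Z/p *)
        num_classes
          (fun f : Fn n -> 'Z_p => is_Zp_hom f /\ exists w, f w <> 0%R)
          (fun f g => exists phi, in_stab x phi /\ forall w, g w = f (phi w)) k].
Proof.
move=> n_gt1 p_pr x_cv N_normal N_index.
have [k hom_classes] := hom_classes_finite p x_cv.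
exists k; split=> //.
- exact: (cv_orbit_classes n_gt1 p_pr x_cv N_normal N_index hom_classes).
- exact: (coset_pair_classes p_pr x_cv hom_classes).
Qed.
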